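(* Consider the excludable public good problem with $n$ players. Let $H:2^N\to\mathbb{R}_{\ge0}\cup\{\infty\}$ be normalized, monotone and symmetric, and let $\mathcal A$ be the VCG-based mechanism with function $H$. Suppose $\mathcal A$ always covers the incurred cost and is a $\rho$-approximation to the social cost for some $\rho<\frac{n^{(1-\delta)/2}}{4}$, where $0<\delta<1$ is a constant (assume $n^{1-\delta}$ and $n^{(1-\delta)/2}$ are integers). Then there is a valuation profile on which $\mathcal A$ serves a nonempty set (so the incurred cost is $1$), the sum of payments is at least $\frac{1-\delta}{2}\ln n-1$, and $\pi(ALG)\ge(\delta\ln n-1)\cdot\pi(OPT)$.
   Context: Excludable public good problem: players $N=\{1,\dots,n\}$, each player $i$ has a private value $v_i\ge0$ for being served; an outcome is a set $S\subseteq N$ of served players; the cost is $C(S)=1$ for $S\ne\emptyset$ and $C(\emptyset)=0$. $H$ is normalized if $H(\emptyset)=0$, monotone if $S\subseteq T\Rightarrow H(S)\le H(T)$, symmetric if $H(S)=H(T)$ whenever $|S|=|T|$. The VCG-based mechanism with $H$ outputs $ALG\in\arg\max_{S\subseteq N}\sum_{i\in S}v_i-H(S)$ (some tie-breaking), for each $i$ computes $ALG^{-i}\in\arg\max_{S\subseteq N\setminus\{i\}}\sum_{j\in S}v_j-H(S)$, and charges $p_i=\left[\sum_{j\in ALG^{-i}}v_j-H(ALG^{-i})\right]-\left[\sum_{j\in ALG\setminus\{i\}}v_j-H(ALG)\right]$. It always covers the cost if $\sum_ip_i\ge C(ALG)$ for every profile. Social cost: $\pi(S)=C(S)+\sum_{i\notin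 S}v_i$; $OPT$ minimizes $\pi$; a $\rho$-approximation means $\pi(ALG)\le\rho\,\pi(OPT)$ on every profile. $\ln$ is the natural logarithm. *)

From Stdlib Require Import Reals.
From mathcomp Require Import all_boot.
Set Implicit Arguments. Unset Strict Implicit. Unset Printing Implicit Defensive.

Local Open Scope R_scope.

Definition sumv (n : nat) (v : 'I_n -> R) (S : {set 'I_n}) : R :=
  \big[Rplus/0]_(i in S) v i.

Definition nonneg_profile (n : nat) (v : 'I_n -> R) : Prop :=
  forall i, 0 <= v i.

(* Extended nonnegative reals R>=0 ∪ {∞}: Some x = x, None = ∞. *)
Definition xR := option R.

Definition xle (a b : xR) : Prop :=
  match a, b with
  | Some x, Some y => x <= y
  | _, None => True
  | None, Some _ => False
  end.

Definition H_nonneg (n : nat) (H : {set 'I_n} -> xR) : Prop :=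
  forall (S : {set 'I_n}) (x : R), H S = Some x -> 0 <= x.
Definition H_normalized (n : nat) (H : {set 'I_n} -> xR) : Prop :=
  H set0 = Some 0.
Definition H_monotone (n : nat) (H : {set 'I_n} -> xR) : Prop :=
  forall S T : {set 'I_n}, S \subset T -> xle (H S) (H T).
Definition H_symmetric (n : nat) (H : {set 'I_n} -> xR) : Prop :=
  forall S T : {set 'I_n}, #|S| = #|T| -> H S = H T.

(* Real part of H (used only on sets where H is finite). *)
Definition Hval (n : nat) (H : {set 'I_n} -> xR) (S : {set 'I_n}) : R :=
  match H S with Some x => x | None => 0 end.

(* S maximizes  sum_{j in S} v_j - H(S)  over all subsets of D
   (sets with H = ∞ have objective -∞). *)
Definition is_argmax_in (n : nat) (H : {set 'I_n} -> xR) (v : 'I_n -> R)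
    (D S : {set 'I_n}) : Prop :=
  S \subset D /\ (exists h, H S = Some h) /\
  forall (T : {set 'I_n}) (h : R), T \subset D -> H T = Some h -> sumv v T - h <= sumv v S - Hval H S.

(* A VCG-based mechanism with function H, with some (arbitrary, deterministic)
   tie-breaking: alg v = ALG, algm i v = ALG^{-i}. *)
Definition VCG_based (n : nat) (H : {set 'I_n} -> xR)
    (alg : ('I_n -> R) -> {set 'I_n})
    (algm : 'I_n -> ('I_n -> R) -> {set 'I_n}) : Prop :=
  forall v, nonneg_profile v ->
    is_argmax_in H v setT (alg v) /\
    forall i, is_argmax_in H v (setT :\ i) (algm i v).

Definition payment (n : nat) (H : {set 'I_n} -> xR)
    (alg : ('I_n -> R) -> {set 'I_n})
    (algm : 'I_n -> ('I_n -> R) -> {set 'I_n}) (v : 'I_n -> R) (i : 'I_n) : R :=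
  (sumv v (algm i v) - Hval H (algm i v))
  - (sumv v (alg v :\ i) - Hval H (alg v)).

Definition total_payment (n : nat) (H : {set 'I_n} -> xR)
    (alg : ('I_n -> R) -> {set 'I_n})
    (algm : 'I_n -> ('I_n -> R) -> {set 'I_n}) (v : 'I_n -> R) : R :=
  \big[Rplus/0]_(i : 'I_n) payment H alg algm v i.

Definition cost (n : nat) (S : {set 'I_n}) : R :=
  if S == set0 then 0 else 1.

Definition social_cost (n : nat) (v : 'I_n -> R) (S : {set 'I_n}) : R :=
  cost S + sumv v (~: S).

Definition is_opt (n : nat) (v : 'I_n -> R) (S : {set 'I_n}) : Prop :=
  forall T : {set 'I_n}, social_cost v S <= social_cost v T.

Definition covers_cost (n : nat) (H : {set 'I_n} -> xR)
    (alg : ('I_n -> R) -> {set 'I_n})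
    (algm : 'I_n -> ('I_n -> R) -> {set 'I_n}) : Prop :=
  forall v, nonneg_profile v -> total_payment H alg algm v >= cost (alg v).

Definition approx (n : nat) (alg : ('I_n -> R) -> {set 'I_n}) (rho : R) : Prop :=
  forall v, nonneg_profile v ->
    forall OPT : {set 'I_n}, is_opt v OPT -> social_cost v (alg v) <= rho * social_cost v OPT.

(* Write h(j) for the value of the symmetric function H on sets of j players.
   If H were infinite somewhere, a large constant profile would force the
   mechanism to serve everybody, so H is finite and rho >= 1.  Cost recovery on
   the profile that values exactly j players highly forces
   j (h(j) - h(j-1)) >= 1, hence h(a+b) - h(a) dominates the harmonic tail
   1/(a+1) + ... + 1/(a+b).  The approximation guarantee on a constant profile
   bounds h(r) <= 2 rho for r ~ n^(1-delta)/2, so the index k <= r minimising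
   h(j)/j exceeds n^((1-delta)/2).  On the profile giving the first k players a
   little more than h(k)/k and the others a little less than the average term of
   the harmonic tail 1/(k+1) + ... + 1/n, the mechanism serves exactly the first
   k players: they pay about h(k) >= ln k, while the unserved players' values
   sum to about ln(n/k) >= delta ln n - ln 2, whereas the optimum costs at most 1. *)

From Pilot Require Import Defs.
From HB Require Import structures.
From Stdlib Require Import Reals Lra.
From mathcomp Require Import all_boot zify.

Set Implicit Arguments.
Unset Strict Implicit.
Unset Printing Implicit Defensive.

Local Open Scope R_scope.

Lemma INR_gt0 m : (0 < m)%N -> 0 < INR m.
Proof. by move=> m_gt0; apply: lt_0_INR; apply/ltP. Qed.

Lemma INR_pred m : (0 < m)%N -> INR m = INR m.-1 + 1.
Proof. by move=> m_gt0; rewrite -S_INR prednK. Qed.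

Lemma INR_double m : INR (2 * m) = 2 * INR m.
Proof. by rewrite mult_INR /=; lra. Qed.

Lemma ln_le x y : 0 < x -> x <= y -> ln x <= ln y.
Proof. by move=> x_gt0 [/(ln_increasing _ _ x_gt0) | ->]; lra. Qed.

Lemma ln2_lt1 : ln 2 < 1.
Proof.
rewrite -[X in _ < X]ln_exp; apply: ln_increasing; first lra.
by have := exp_ineq1 1; lra.
Qed.

Lemma ln_succ_sub_le t : 0 < t -> ln (t + 1) - ln t <= / t.
Proof.
move=> t_gt0; have u_gt0 := Rinv_0_lt_compat _ t_gt0.
have -> : t + 1 = t * (1 + / t) by field; lra.
have : ln (1 + / t) <= / t.
  by rewrite -[X in _ <= X]ln_exp; apply: ln_le; [lra | exact: exp_ineq1_le].
by rewrite ln_mult; lra.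
Qed.

Lemma Rmult_le_of_Rdiv_le a b c d : 0 < c -> 0 < d -> a / c <= b / d -> a * d <= b * c.
Proof.
move=> c_gt0 d_gt0 le_ab.
have cd_ge0 : 0 <= c * d by nra.
have := Rmult_le_compat_l _ _ _ cd_ge0 le_ab.
have -> : c * d * (a / c) = a * d by field; lra.
by have -> : c * d * (b / d) = b * c by field; lra.
Qed.

Lemma Rdiv_le_of_Rmult_le a b c d : 0 < c -> 0 < d -> a * d <= b * c -> a / c <= b / d.
Proof.
move=> c_gt0 d_gt0 le_ad; apply: (Rmult_le_reg_r (c * d)); first nra.
have -> : a / c * (c * d) = a * d by field; lra.
by have -> : b / d * (c * d) = b * c by field; lra.
Qed.

Lemma Rmult_div_le a c d e : 0 < d -> a * c <= d * e -> a * (c / d) <= e.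
Proof.
move=> d_gt0 le_ac; apply: (Rmult_le_reg_l d) => //.
by have -> : d * (a * (c / d)) = a * c by field; lra.
Qed.

Lemma Rmult_le_of_unit c a b : 0 <= b <= 1 -> c <= a -> 0 <= a -> c * b <= a.
Proof. by move=> b_range c_le a_ge0; have [c_ge0|c_lt0] := Rle_lt_dec 0 c; nra. Qed.

Lemma Rpower_exponent_facts n delta s m : (0 < n)%N -> 0 < delta < 1 -> 1 < s ->
  s = Rpower (INR n) ((1 - delta) / 2) -> INR m = Rpower (INR n) (1 - delta) ->
  [/\ INR m = s * s, (m < n)%N, ln s = (1 - delta) / 2 * ln (INR n)
    & ln (INR m) = (1 - delta) * ln (INR n)].
Proof.
move=> n_gt0 delta_range s_gt1 s_eq m_eq.
have n_gt1 : 1 < INR n.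
  have [n_eq1|n_gt1] : n = 1%N \/ (1 < n)%N by lia.
    move: s_eq; rewrite n_eq1 /Rpower; change (INR 1) with 1.
    by rewrite ln_1 Rmult_0_r exp_0; lra.
  by apply: (lt_INR 1); apply/ltP.
split.
- by rewrite m_eq s_eq -Rpower_plus; congr Rpower; field.
- apply/ltP; apply: INR_lt; rewrite m_eq -[X in _ < X]Rpower_1; last lra.
  by apply: Rpower_lt; lra.
- by rewrite s_eq ln_Rpower.
- by rewrite m_eq ln_Rpower.
Qed.

(** * Harmonic tails *)

Fixpoint harm (k b : nat) : R :=
  if b is b'.+1 then harm k b' + / INR (k + b) else 0.

Lemma harm0 k : harm k 0 = 0.
Proof. by []. Qed.

Lemma harmS k b : harm k b.+1 = harm k b + / INR (k + b.+1).
Proof. by []. Qed.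

Lemma harm_ge0 k b : 0 <= harm k b.
Proof.
elim: b => [|b IH]; rewrite ?harm0 ?harmS; first lra.
have : 0 < INR (k + b.+1) by apply: INR_gt0; lia.
by move/Rinv_0_lt_compat; lra.
Qed.

Lemma harm_le_shift a k b : (a <= k)%N -> harm k b <= harm a b.
Proof.
move=> le_ak; elim: b => [|b IH]; rewrite ?harm0 ?harmS; first lra.
have : / INR (k + b.+1) <= / INR (a + b.+1).
  by apply: Rinv_le_contravar; [apply: INR_gt0 | apply: le_INR; apply/leP]; lia.
lra.
Qed.

Lemma harm_add k b c : harm k (b + c) = harm k b + harm (k + b) c.
Proof.
elim: c => [|c IH]; first by rewrite addn0 harm0; lra.
rewrite addnS !harmS IH.
have -> : (k + (b + c).+1 = k + b + c.+1)%N by lia.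
lra.
Qed.

Lemma ln_le_harm k b : ln (INR (k + b).+1) - ln (INR k.+1) <= harm k b.
Proof.
elim: b => [|b IH]; first by rewrite addn0 harm0; lra.
have := ln_succ_sub_le (INR_gt0 (ltn0Sn (k + b))).
by rewrite harmS -S_INR addnS; lra.
Qed.

Lemma harm_lower k b : INR b <= INR (k + b) * harm k b.
Proof.
elim: b => [|b IH]; rewrite ?harm0 ?harmS; first by rewrite Rmult_0_r; apply: Rle_refl.
have e : INR (k + b.+1) = INR (k + b) + 1 by rewrite addnS S_INR.
have kb_ge0 := pos_INR (k + b); have := harm_ge0 k b.
by rewrite Rmult_plus_distr_l Rinv_r ?e ?S_INR => [*|]; [nra | lra].
Qed.

Lemma harm_upper k c : INR k.+1 * harm k c <= INR c.
Proof.
elim: c => [|c IH]; rewrite ?harm0 ?harmS; first by rewrite Rmult_0_r; apply: Rle_refl.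
have k_gt0 : 0 < INR k.+1 by apply: INR_gt0.
have : / INR (k + c.+1) <= / INR k.+1.
  by apply: Rinv_le_contravar => //; apply: le_INR; apply/leP; lia.
have := Rinv_r _ (Rgt_not_eq _ _ k_gt0).
rewrite (S_INR c); nra.
Qed.

Lemma harm_concave k b c : INR b * harm k (b + c) <= INR (b + c) * harm k b.
Proof.
rewrite harm_add plus_INR.
have := harm_upper (k + b) c; have := harm_lower k b.
have := harm_ge0 k b; have := harm_ge0 (k + b) c.
have := pos_INR b; have := pos_INR c; have := pos_INR (k + b).
rewrite S_INR; nra.
Qed.

Lemma harm_le_increment (h : nat -> R) N a b :
  (forall j, (0 < j <= N)%N -> 1 <= INR j * (h j - h j.-1)) ->
  (a + b <= N)%N -> harm a b <= h (a + b)%N - h a.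
Proof.
move=> h_incr; elim: b => [|b IH] ab_le_N; first by rewrite addn0 harm0; lra.
have j_gt0 : 0 < INR (a + b.+1) by apply: INR_gt0; lia.
have := h_incr (a + b.+1)%N ltac:(lia); rewrite harmS addnS succnK -addnS.
have := Rinv_r _ (Rgt_not_eq _ _ j_gt0).
have := IH ltac:(lia); nra.
Qed.

Lemma argmin_nat (f : nat -> R) r : (0 < r)%N ->
  exists2 k, (0 < k <= r)%N & forall j, (0 < j <= r)%N -> f k <= f j.
Proof.
elim: r => [//|r IH] _.
have [->|r_gt0] := posnP r.
  exists 1%N => // j j_range.
  have -> : j = 1%N by lia.
  lra.
have [k k_range k_min] := IH r_gt0.
have [le_k_r1|lt_r1_k] := Rle_dec (f k) (f r.+1).
  exists k => [|j j_range]; first lia.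
  have [j_le_r|->] : (j <= r)%N \/ j = r.+1 by lia.
    by apply: k_min; lia.
  by [].
exists r.+1 => [|j j_range]; first lia.
have [j_le_r|->] : (j <= r)%N \/ j = r.+1 by lia.
  by have := k_min j ltac:(lia); lra.
lra.
Qed.

Lemma exists_min_ratio (h : nat -> R) s r :
  (0 < r)%N -> (forall j, (0 < j <= r)%N -> 1 <= h j) -> s * h r < INR r ->
  exists k, [/\ (0 < k <= r)%N, s < INR k &
    forall a, (0 < a <= k)%N -> INR a * h k <= INR k * h a].
Proof.
move=> r_gt0 h_ge1 small.
have [k k_range k_min] := argmin_nat (fun j => h j / INR j) r_gt0.
have pos j : (0 < j)%N -> 0 < INR j by apply: INR_gt0.
have k_gt0 := pos k ltac:(lia).
exists k; split => // [|a a_range].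
- have [s_le0|s_gt0] := Rle_lt_dec s 0; first lra.
  have r_pos := pos r r_gt0.
  have cross := Rmult_le_of_Rdiv_le k_gt0 r_pos (k_min r ltac:(lia)).
  have : s * h k * INR r < INR k * INR r.
    have := Rmult_lt_compat_r _ _ _ k_gt0 small.
    have := Rmult_le_compat_l _ _ _ (Rlt_le _ _ s_gt0) cross; lra.
  move/(Rmult_lt_reg_r _ _ _ r_pos); have := h_ge1 k k_range; nra.
- have := Rmult_le_of_Rdiv_le k_gt0 (pos a ltac:(lia)) (k_min a ltac:(lia)); lra.
Qed.

(** * Sums over players *)

HB.instance Definition _ := Monoid.isComLaw.Build R 0 Rplus
  (fun a b c => esym (Rplus_assoc a b c)) Rplus_comm Rplus_0_l.

Lemma Rle_big (I : finType) (F G : I -> R) :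
  (forall i, F i <= G i) -> \big[Rplus/0]_i F i <= \big[Rplus/0]_i G i.
Proof. by move=> FG; apply: (big_ind2 (fun a b => a <= b)) => // [|*]; lra. Qed.

Section SumOverPlayers.
Variable n : nat.
Implicit Types (v : 'I_n -> R) (S : {set 'I_n}).

Lemma sumv_ge0 v S : nonneg_profile v -> 0 <= sumv v S.
Proof. by move=> v_ge0; apply: (big_ind (fun a => 0 <= a)) => // [|*]; lra. Qed.

Lemma sumv_const c S : sumv (fun=> c) S = INR #|S| * c.
Proof.
rewrite /sumv big_const; elim: #|S| => [|m IH]; first by rewrite /=; lra.
by rewrite iterS IH S_INR; lra.
Qed.

Lemma sumv_D1 v S (i : 'I_n) :
  sumv v S = (if i \in S then v i else 0) + sumv v (S :\ i).
Proof.
rewrite /sumv; case: ifPn => iS.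
  by rewrite (bigD1 i) //=; congr Rplus; apply: eq_bigl => j; rewrite !inE andbC.
rewrite Rplus_0_l; apply: eq_bigl => j; rewrite !inE.
by case: eqP => // ->; rewrite (negbTE iS).
Qed.

Lemma card_setC S : #|~: S| = (n - #|S|)%N.
Proof. by have := cardsC S; rewrite card_ord; lia. Qed.

Definition prefix k : {set 'I_n} := [set i : 'I_n | (i < k)%N].

Lemma card_prefix k : (k <= n)%N -> #|prefix k| = k.
Proof.
move=> k_le_n; rewrite -sum1_card.
rewrite (eq_bigl (fun i : 'I_n => (i < k)%N)); last by move=> i; rewrite inE.
by rewrite (big_ord_narrow k_le_n) sum1_card card_ord.
Qed.

Lemma prefix_subset a b : (a <= b)%N -> prefix a \subset prefix b.
Proof. by move=> ab; apply/subsetP => i; rewrite !inE => /leq_trans; apply. Qed.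

Lemma prefix_neq0 k : (0 < k <= n)%N -> prefix k != set0.
Proof. by case/andP=> k_gt0 k_le_n; rewrite -card_gt0 card_prefix. Qed.

Lemma card_setI_prefix S k : (k <= n)%N -> (#|S :&: prefix k| <= k)%N.
Proof. by move=> k_le_n; rewrite -{2}(card_prefix k_le_n) subset_leq_card ?subsetIr. Qed.

Lemma card_setD_prefix S k : (k <= n)%N -> (#|S :\: prefix k| <= n - k)%N.
Proof.
move=> k_le_n; rewrite -{2}(card_prefix k_le_n) -card_setC subset_leq_card //.
by apply/subsetP => i; rewrite !inE => /andP[].
Qed.

Definition prefix_profile k (x y : R) : 'I_n -> R := fun i => if (i < k)%N then x else y.

Lemma prefix_profile_ge0 k x y : 0 <= x -> 0 <= y -> nonneg_profile (prefix_profile k x y).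
Proof. by move=> x_ge0 y_ge0 i; rewrite /prefix_profile; case: ifP. Qed.

Lemma sumv_prefix_profile k x y S :
  sumv (prefix_profile k x y) S =
  INR #|S :&: prefix k| * x + INR #|S :\: prefix k| * y.
Proof.
rewrite /sumv (bigID (mem (prefix k))) /=.
rewrite (eq_bigr (fun=> x)); last by move=> i /andP[_]; rewrite inE /prefix_profile => ->.
rewrite [X in _ + X](eq_bigr (fun=> y)); last first.
  by move=> i /andP[_]; rewrite inE /prefix_profile => /negbTE ->.
rewrite (eq_bigl (fun i => i \in S :&: prefix k)); last by move=> i; rewrite in_setI.
rewrite [X in _ + X](eq_bigl (fun i => i \in S :\: prefix k)); last first.
  by move=> i; rewrite in_setD andbC.
by rewrite -!/(sumv (fun=> _) _) !sumv_const.
Qed.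

Lemma sum_prefix_profile k x y : (k <= n)%N ->
  \big[Rplus/0]_(i : 'I_n) prefix_profile k x y i = INR k * x + INR (n - k) * y.
Proof.
move=> k_le_n; have := sumv_prefix_profile k x y [set: 'I_n].
rewrite setTI setTD card_setC card_prefix // /sumv => <-.
by apply: eq_bigl => i; rewrite inE.
Qed.

Lemma cost_ge0 S : 0 <= cost S.
Proof. by rewrite /cost; case: ifP => _; lra. Qed.

Lemma cost_nonempty S : S != set0 -> cost S = 1.
Proof. by rewrite /cost => /negbTE ->. Qed.

Lemma social_cost_ge_cost v S : nonneg_profile v -> cost S <= social_cost v S.
Proof. by move=> v_ge0; have := sumv_ge0 (~: S) v_ge0; rewrite /social_cost; lra. Qed.

Lemma social_cost_setT v : (0 < n)%N -> social_cost v [set: 'I_n] = 1.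
Proof.
move=> n_gt0; rewrite /social_cost cost_nonempty; last first.
  by apply/set0Pn; exists (Ordinal n_gt0); rewrite inE.
by rewrite setCT /sumv big_set0; lra.
Qed.

Lemma opt_social_cost_le1 v OPT : (0 < n)%N -> is_opt v OPT -> social_cost v OPT <= 1.
Proof. by move=> n_gt0 /(_ setT); rewrite social_cost_setT. Qed.

Lemma constant_profile_opt x : (0 < n)%N -> 1 <= INR n * x ->
  is_opt (fun=> x) [set: 'I_n].
Proof.
move=> n_gt0 nx_ge1 T; rewrite social_cost_setT //.
have x_ge0 : 0 <= x by have := INR_gt0 n_gt0; nra.
have [->|T_ne0] := eqVneq T set0.
  by rewrite /social_cost /cost eqxx setC0 sumv_const cardsT card_ord; lra.
by have := social_cost_ge_cost T (fun=> x_ge0); rewrite cost_nonempty.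
Qed.

End SumOverPlayers.

Arguments prefix_profile : clear implicits.

(** * VCG-based mechanisms *)

Section VCGMechanism.
Variables (n : nat) (H : {set 'I_n} -> xR).
Variables (alg : ('I_n -> R) -> {set 'I_n}) (algm : 'I_n -> ('I_n -> R) -> {set 'I_n}).
Variable rho : R.
Hypothesis n_gt0 : (0 < n)%N.
Hypothesis H_ge0 : H_nonneg H.
Hypothesis H_norm : H_normalized H.
Hypothesis H_mono : H_monotone H.
Hypothesis H_sym : H_symmetric H.
Hypothesis vcg : VCG_based H alg algm.
Hypothesis covers : covers_cost H alg algm.
Hypothesis approx_rho : approx alg rho.
Implicit Types (v : 'I_n -> R) (S T : {set 'I_n}).

Lemma approx_serves_all V : rho < V -> 1 <= V -> alg (fun=> V) = [set: 'I_n].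
Proof.
move=> rho_lt_V V_ge1; set v : 'I_n -> R := fun=> V.
have v_ge0 : nonneg_profile v by move=> i; rewrite /v; lra.
have nV_ge1 : 1 <= INR n * V.
  have : 1 <= INR n by apply: (le_INR 1); apply/leP.
  nra.
have := approx_rho v_ge0 (constant_profile_opt n_gt0 nV_ge1).
rewrite social_cost_setT // Rmult_1_r => small.
apply/eqP; rewrite eqEsubset subsetT /=; apply/subsetP => i _; apply: contraT => i_out.
have : 1 <= INR #|~: alg v|.
  by apply: (le_INR 1); apply/leP/card_gt0P; exists i; rewrite inE.
by have := cost_ge0 (alg v); move: small; rewrite /social_cost sumv_const; nra.
Qed.

Lemma approx_rho_ge1 : 1 <= rho.
Proof.
apply: Rnot_lt_le => rho_lt1.
have v_ge0 : nonneg_profile (fun _ : 'I_n => 1) by move=> _; lra.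
have opt : is_opt (fun=> 1) [set: 'I_n].
  by apply: constant_profile_opt => //; rewrite Rmult_1_r; apply: (le_INR 1); apply/leP.
have := approx_rho v_ge0 opt.
by rewrite approx_serves_all ?social_cost_setT //; lra.
Qed.

Lemma approx_H_finite S : H S = Some (Hval H S).
Proof.
have rho_ge1 := approx_rho_ge1.
have v_ge0 : nonneg_profile (fun _ : 'I_n => rho + 1) by move=> _; lra.
have [[_ [[h HT] _]] _] := vcg v_ge0.
rewrite approx_serves_all in HT; [|lra..].
by have := H_mono (subsetT S); rewrite HT /Hval; case: (H S).
Qed.

Definition objective v S := sumv v S - Hval H S.

Definition Hcard j := Hval H (prefix n j).

Lemma Hval_card S : Hval H S = Hcard #|S|.
Proof.
by rewrite /Hcard /Hval (H_sym (card_prefix _)) // -[leqRHS](card_ord n) max_card.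
Qed.

Lemma Hcard0 : Hcard 0 = 0.
Proof. by rewrite -(cards0 'I_n) -Hval_card /Hval H_norm. Qed.

Lemma Hcard_ge0 j : 0 <= Hcard j.
Proof. exact: H_ge0 (approx_H_finite _). Qed.

Lemma Hcard_mono a b : (a <= b)%N -> Hcard a <= Hcard b.
Proof.
move=> le_ab; have := H_mono (prefix_subset n le_ab).
by rewrite (approx_H_finite (prefix n a)) (approx_H_finite (prefix n b)).
Qed.

Lemma objective_set0 v : objective v set0 = 0.
Proof. by rewrite /objective /sumv big_set0 Hval_card cards0 Hcard0; lra. Qed.

Lemma objective_prefix_profile k x y S :
  objective (prefix_profile n k x y) S =
  INR #|S :&: prefix n k| * x + INR #|S :\: prefix n k| * y -
  Hcard (#|S :&: prefix n k| + #|S :\: prefix n k|).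
Proof. by rewrite /objective sumv_prefix_profile Hval_card cardsID. Qed.

Lemma objective_prefix k x y : (k <= n)%N ->
  objective (prefix_profile n k x y) (prefix n k) = INR k * x - Hcard k.
Proof.
move=> k_le_n; rewrite objective_prefix_profile setIid setDv cards0 addn0 card_prefix //.
by change (INR 0) with 0; lra.
Qed.

Lemma alg_max v T : nonneg_profile v -> objective v T <= objective v (alg v).
Proof.
move=> v_ge0; have [[_ [_ alg_opt]] _] := vcg v_ge0.
exact: alg_opt (subsetT T) (approx_H_finite T).
Qed.

Lemma algm_max v (i : 'I_n) T : nonneg_profile v -> T \subset [set: 'I_n] :\ i ->
  objective v T <= objective v (algm i v).
Proof.
move=> v_ge0 T_sub; have [_ /(_ i) [_ [_ algm_opt]]] := vcg v_ge0.
exact: algm_opt T_sub (approx_H_finite T).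
Qed.

Lemma algm_notin v (i : 'I_n) : nonneg_profile v -> i \notin algm i v.
Proof.
move=> v_ge0; have [_ /(_ i) [algm_sub _]] := vcg v_ge0.
by apply/negP => /(subsetP algm_sub); rewrite !inE eqxx.
Qed.

(* The type annotations on [i] make [S :\ i] elaborate as in [Defs], so that
   [lra] identifies the two occurrences of [sumv v (alg v :\ i)]. *)
Lemma payment_eq v (i : 'I_n) : payment H alg algm v i =
  objective v (algm i v) - objective v (alg v) + (if i \in alg v then v i else 0).
Proof. by rewrite /payment /objective (sumv_D1 v (alg v) i); lra. Qed.

Lemma payment_le v (i : 'I_n) : nonneg_profile v ->
  payment H alg algm v i <= (if i \in alg v then v i else 0).
Proof. by move=> v_ge0; rewrite payment_eq; have := alg_max (algm i v) v_ge0; lra. Qed.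

Lemma payment_ge v (i : 'I_n) T : nonneg_profile v -> T \subset [set: 'I_n] :\ i ->
  objective v T - objective v (alg v) + (if i \in alg v then v i else 0) <=
  payment H alg algm v i.
Proof. by move=> v_ge0 T_sub; rewrite payment_eq; have := algm_max v_ge0 T_sub; lra. Qed.

Section HighPrefix.
Variables (j : nat) (V : R).
Hypotheses (j_gt0 : (0 < j)%N) (j_le_n : (j <= n)%N) (V_gt : Hcard n < V).

Let v := prefix_profile n j V 0.

Let v_ge0 : nonneg_profile v.
Proof. by apply: prefix_profile_ge0; [have := Hcard_ge0 n; lra | apply: Rle_refl]. Qed.

Lemma objective_few_served S : (#|S :&: prefix n j| <= j.-1)%N ->
  objective v S <= INR j.-1 * V - Hcard j.-1.
Proof.
move=> few; rewrite objective_prefix_profile Rmult_0_r Rplus_0_r.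
set a := #|_ :&: _| in few *; set b := #|_ :\: _|.
have Ha := Hcard_mono (leq_addr b a).
have Hj : Hcard j.-1 < V by have := Hcard_mono (leq_trans (leq_pred j) j_le_n); lra.
have Ha0 := Hcard_ge0 a; have Hj0 := Hcard_ge0 j.-1.
have [<-|a_lt] : a = j.-1 \/ (a < j.-1)%N by lia.
  lra.
have : INR a + 1 <= INR j.-1 by rewrite -S_INR; apply: le_INR; apply/leP.
move/(Rmult_le_compat_r V) => /(_ ltac:(lra)); lra.
Qed.

Lemma prefix_subset_alg : prefix n j \subset alg v.
Proof.
apply/setIidPr/eqP; rewrite eqEcard subsetIr card_prefix //= leqNgt; apply/negP => few.
have {}few : (#|alg v :&: prefix n j| <= j.-1)%N by rewrite -ltnS prednK.
have := objective_few_served few; have := alg_max (prefix n j) v_ge0.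
rewrite objective_prefix // (INR_pred j_gt0).
by have := Hcard_mono j_le_n; have := Hcard_ge0 j.-1; lra.
Qed.

Lemma payment_le_increment i :
  payment H alg algm v i <= prefix_profile n j (Hcard j - Hcard j.-1) 0 i.
Proof.
rewrite /prefix_profile; case: ifPn => i_lt_j; last first.
  by have := payment_le i v_ge0; rewrite /v /prefix_profile (negbTE i_lt_j) if_same.
have i_in : i \in prefix n j by rewrite inE.
have few : (#|algm i v :&: prefix n j| <= j.-1)%N.
  have : algm i v :&: prefix n j \subset prefix n j :\ i.
    apply/subsetP => l; rewrite !inE => /andP[l_in ->]; rewrite andbT.
    by apply: contraTneq l_in => ->; exact: algm_notin.
  have card_Ki : #|prefix n j :\ i| = j.-1.
    by have := cardsD1 i (prefix n j); rewrite i_in card_prefix // add1n => {2}->.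
  by move/subset_leq_card; rewrite card_Ki.
have := objective_few_served few; have := alg_max (prefix n j) v_ge0.
rewrite objective_prefix // payment_eq (subsetP prefix_subset_alg i i_in).
by rewrite /v /prefix_profile i_lt_j (INR_pred j_gt0); lra.
Qed.

Lemma covers_cost_increment : 1 <= INR j * (Hcard j - Hcard j.-1).
Proof.
have served : alg v != set0.
  by rewrite -card_gt0 (leq_trans _ (subset_leq_card prefix_subset_alg)) ?card_prefix.
have := covers v_ge0; rewrite cost_nonempty // => /Rge_le /Rle_trans; apply.
apply: Rle_trans (Rle_big payment_le_increment) _.
by rewrite sum_prefix_profile // Rmult_0_r Rplus_0_r; apply: Rle_refl.
Qed.

End HighPrefix.

Lemma Hcard_increment a b : (a + b <= n)%N -> harm a b <= Hcard (a + b) - Hcard a.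
Proof.
apply: harm_le_increment => j /andP[j_gt0 j_le_n].
by apply: (covers_cost_increment (V := Hcard n + 1)) => //; lra.
Qed.

Lemma Hcard_ge1 j : (0 < j)%N -> 1 <= Hcard j.
Proof.
move=> j_gt0; have := Hcard_increment (a := 0) (b := 1) ltac:(lia).
by rewrite /harm add0n Hcard0 Rinv_1; have := Hcard_mono j_gt0; lra.
Qed.

Lemma ln_le_Hcard k : (k <= n)%N -> ln (INR k.+1) <= Hcard k.
Proof.
move=> k_le_n; have := Hcard_increment (a := 0) k_le_n; have := ln_le_harm 0 k.
by rewrite add0n Hcard0 ln_1; lra.
Qed.

Lemma approx_constant_profile x : 1 <= INR n * x ->
  exists j, [/\ (j <= n)%N, INR (n - j) * x <= rho & Hcard j <= INR j * x].
Proof.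
move=> nx_ge1; have x_ge0 : 0 <= x by have := INR_gt0 n_gt0; nra.
have v_ge0 : nonneg_profile (fun _ : 'I_n => x) by [].
exists #|alg (fun=> x)|; split.
- by rewrite -[leqRHS](card_ord n) max_card.
- have := approx_rho v_ge0 (constant_profile_opt n_gt0 nx_ge1).
  rewrite social_cost_setT // /social_cost sumv_const card_setC.
  by have := cost_ge0 (alg (fun=> x)); lra.
- have := alg_max set0 v_ge0; rewrite objective_set0 /objective sumv_const Hval_card.
  lra.
Qed.

Lemma Hcard_small s r : (0 < r < n)%N -> s * s <= 2 * INR r ->
  INR n <= 2 * INR (n - r) -> rho < s / 4 -> s * Hcard r < INR r.
Proof.
move=> r_range s2_le n_le rho_lt; have rho_ge1 := approx_rho_ge1.
have nr_gt0 : 0 < INR (n - r) by apply: INR_gt0; lia.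
have nr_le_n : INR (n - r) <= INR n by apply: le_INR; apply/leP; lia.
set x := rho / INR (n - r).
have rho_eq : INR (n - r) * x = rho by rewrite /x; field; lra.
have x_gt0 : 0 < x by apply: Rdiv_lt_0_compat; lra.
have nx_ge1 : 1 <= INR n * x.
  by have := Rmult_le_compat_r _ _ _ (Rlt_le _ _ x_gt0) nr_le_n; lra.
have [j [j_le_n nj_le Hj]] := approx_constant_profile nx_ge1.
have r_le_j : (r <= j)%N.
  have : INR (n - j) <= INR (n - r) by apply: (Rmult_le_reg_r x); lra.
  by move/INR_le/leP; lia.
have : Hcard r <= 2 * rho.
  have := Hcard_mono r_le_j.
  have : INR j <= INR n by apply: le_INR; apply/leP.
  move/(Rmult_le_compat_r _ _ _ (Rlt_le _ _ x_gt0)).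
  have := Rmult_le_compat_r _ _ _ (Rlt_le _ _ x_gt0) n_le; lra.
nra.
Qed.

Section HardProfile.
Variable k : nat.
Hypotheses (k_gt0 : (0 < k)%N) (k_lt_n : (k < n)%N).
Hypothesis Hcard_min : forall a, (0 < a <= k)%N -> INR a * Hcard k <= INR k * Hcard a.

(* The first [k] players value service at [h(k)/k + eta], the others at the
   average term of the harmonic tail [harm k (n - k)] minus [eps]; the two
   perturbations make the first [k] players the unique maximiser. *)
Local Notation eta := (/ (2 * INR k * INR k)).
Local Notation eps := (/ (2 * INR n)).
Local Notation x := (Hcard k / INR k + eta).
Local Notation y := (harm k (n - k) / INR (n - k) - eps).

Definition hard_profile : 'I_n -> R := prefix_profile n k x y.

Let k_le_n : (k <= n)%N. Proof. exact: ltnW. Qed.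
Let k_pos : 0 < INR k. Proof. exact: INR_gt0. Qed.
Let n_pos : 0 < INR n. Proof. exact: INR_gt0. Qed.
Let nk_pos : 0 < INR (n - k). Proof. by apply: INR_gt0; lia. Qed.
Let eta_gt0 : 0 < eta. Proof. by apply: Rinv_0_lt_compat; nra. Qed.
Let eps_gt0 : 0 < eps. Proof. by apply: Rinv_0_lt_compat; nra. Qed.

Lemma hard_profile_ge0 : nonneg_profile hard_profile.
Proof.
have x_ge0 : 0 <= x.
  apply: Rplus_le_le_0_compat; last lra.
  exact: Rmult_le_pos (Hcard_ge0 k) (Rlt_le _ _ (Rinv_0_lt_compat _ k_pos)).
have : 1 / INR n <= harm k (n - k) / INR (n - k).
  apply: Rdiv_le_of_Rmult_le => //; have := harm_lower k (n - k).
  by rewrite subnKC //; lra.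
have -> : 1 / INR n = 2 * eps by field; lra.
by move=> ?; apply: prefix_profile_ge0; lra.
Qed.

Lemma hard_profile_gain a b : (a <= k)%N -> (b <= n - k)%N ->
  INR a * x + INR b * y - Hcard (a + b) <= INR a * eta - INR b * eps.
Proof.
move=> a_le_k b_le.
have served_gain : INR a * x - Hcard a <= INR a * eta.
  have [->|a_gt0] := posnP a; first by rewrite Hcard0; change (INR 0) with 0; lra.
  have := Rmult_div_le k_pos (Hcard_min (a := a) ltac:(lia)); lra.
have unserved_gain : INR b * y <= harm k b - INR b * eps.
  have := harm_concave k b (n - k - b); rewrite subnKC // => concave.
  have := Rmult_div_le nk_pos concave; lra.
have := harm_le_shift b a_le_k; have := Hcard_increment (a := a) (b := b) ltac:(lia).
lra.
Qed.

Lemma objective_hard_profile S :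
  objective hard_profile S <=
  INR #|S :&: prefix n k| * eta - INR #|S :\: prefix n k| * eps.
Proof.
rewrite objective_prefix_profile.
exact: hard_profile_gain (card_setI_prefix S k_le_n) (card_setD_prefix S k_le_n).
Qed.

Lemma alg_hard_profile : alg hard_profile = prefix n k.
Proof.
have := alg_max (prefix n k) hard_profile_ge0; rewrite objective_prefix //.
have := objective_hard_profile (alg hard_profile).
have := card_setI_prefix (alg hard_profile) k_le_n.
set a := #|_ :&: _|; set b := #|_ :\: _| => a_le_k.
have := le_INR _ _ (elimT leP a_le_k); have := pos_INR b.
have -> : INR k * x - Hcard k = INR k * eta by field; lra.
move=> b_ge0 ak_le le_gain le_opt.
have a_eq : a = k by apply: INR_eq; nra.
have b_eq : b = 0%N by apply: INR_eq; change (INR 0) with 0; nra.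
apply/eqP; rewrite eqEcard -setD_eq0 -cards_eq0 -/b b_eq eqxx /= card_prefix //.
by rewrite -(cardsID (prefix n k) (alg _)) -/a -/b a_eq b_eq addn0.
Qed.

Lemma total_payment_hard_profile : Hcard k - / 2 <= total_payment H alg algm hard_profile.
Proof.
have pay i : prefix_profile n k (Hcard k - (INR k - 1) * x) 0 i <=
             payment H alg algm hard_profile i.
  rewrite /prefix_profile; case: ifPn => i_lt_k.
  - have := payment_ge (i := i) hard_profile_ge0 (sub0set _).
    rewrite objective_set0 alg_hard_profile objective_prefix // inE i_lt_k.
    by rewrite /hard_profile /prefix_profile i_lt_k; lra.
  - have i_out : i \notin prefix n k by rewrite inE.
    have K_sub : prefix n k \subset [set: 'I_n] :\ i.
      by apply/subsetP => l l_in; rewrite !inE andbT; apply: contraNneq i_out => <-.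
    have := payment_ge (i := i) hard_profile_ge0 K_sub.
    by rewrite alg_hard_profile (negbTE i_out); lra.
apply: Rle_trans (Rle_big pay); rewrite sum_prefix_profile //.
have -> : INR k * (Hcard k - (INR k - 1) * x) = Hcard k - / 2 + / (2 * INR k).
  by field; lra.
have := Rinv_0_lt_compat (2 * INR k) ltac:(lra); rewrite Rmult_0_r; lra.
Qed.

Lemma social_cost_hard_profile :
  / 2 + harm k (n - k) <= social_cost hard_profile (alg hard_profile).
Proof.
rewrite alg_hard_profile /social_cost cost_nonempty ?prefix_neq0 ?k_gt0 //.
rewrite /hard_profile sumv_prefix_profile setIC setICr setDE setIid cards0.
rewrite card_setC card_prefix //; change (INR 0) with 0.
have -> : INR (n - k) * y = harm k (n - k) - INR (n - k) * eps by field; lra.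
have : INR (n - k) * eps <= INR n * eps.
  by apply: Rmult_le_compat_r; [lra | apply: le_INR; apply/leP; lia].
have -> : INR n * eps = / 2 by field; lra.
lra.
Qed.

End HardProfile.

Lemma hard_profile_spec k : (0 < k < n)%N ->
  (forall a, (0 < a <= k)%N -> INR a * Hcard k <= INR k * Hcard a) ->
  [/\ nonneg_profile (hard_profile k), alg (hard_profile k) = prefix n k,
      ln (INR k.+1) - / 2 <= total_payment H alg algm (hard_profile k) &
      / 2 + ln (INR n.+1) - ln (INR k.+1) <=
        social_cost (hard_profile k) (alg (hard_profile k))].
Proof.
case/andP=> k_gt0 k_lt_n k_min; split.
- exact: hard_profile_ge0.
- exact: alg_hard_profile.
- have := total_payment_hard_profile k_gt0 k_lt_n k_min.
  by have := ln_le_Hcard (ltnW k_lt_n); lra.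
- have := social_cost_hard_profile k_gt0 k_lt_n k_min.
  by have := ln_le_harm k (n - k); rewrite subnKC; [lra | exact: ltnW].
Qed.

Lemma exists_hard_prefix s m : (0 < m < n)%N -> INR m = s * s -> rho < s / 4 ->
  exists k, [/\ (0 < k < n)%N, (k.+1 <= 2 * m)%N, s < INR k &
    forall a, (0 < a <= k)%N -> INR a * Hcard k <= INR k * Hcard a].
Proof.
move=> m_range m_eq rho_lt; set r := (m.+1 %/ 2)%N.
have [m_le_2r r2_le_m1] : (m <= 2 * r)%N /\ (2 * r <= m.+1)%N by rewrite /r; lia.
have r_range : (0 < r < n)%N by lia.
have r_half : s * s <= 2 * INR r.
  by rewrite -m_eq -INR_double; apply: le_INR; apply/leP.
have n_half : INR n <= 2 * INR (n - r).
  by rewrite -INR_double; apply: le_INR; apply/leP; lia.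
have small := Hcard_small r_range r_half n_half rho_lt.
have Hcard_ge1_range j : (0 < j <= r)%N -> 1 <= Hcard j by case/andP=> /Hcard_ge1.
have [|k [k_range s_lt_k k_min]] := exists_min_ratio _ Hcard_ge1_range small.
  by case/andP: r_range.
by exists k; split=> //; lia.
Qed.

End VCGMechanism.

Theorem theorem5p1 (n : nat) (H : {set 'I_n} -> xR)
    (alg : ('I_n -> R) -> {set 'I_n})
    (algm : 'I_n -> ('I_n -> R) -> {set 'I_n}) (rho delta : R) :
  (1 <= n)%nat ->
  H_nonneg H -> H_normalized H -> H_monotone H -> H_symmetric H ->
  VCG_based H alg algm ->
  covers_cost H alg algm ->
  approx alg rho ->
  0 < delta < 1 ->
  (exists k : nat, INR k = Rpower (INR n) (1 - delta)) ->
  (exists k : nat, INR k = Rpower (INR n) ((1 - delta) / 2)) ->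
  rho < Rpower (INR n) ((1 - delta) / 2) / 4 ->
  exists v : 'I_n -> R,
    nonneg_profile v /\
    alg v != set0 /\
    total_payment H alg algm v >= (1 - delta) / 2 * ln (INR n) - 1 /\
    (forall OPT : {set 'I_n}, is_opt v OPT ->
       social_cost v (alg v) >= (delta * ln (INR n) - 1) * social_cost v OPT).
Proof.
move=> n_gt0 H_ge0 H_norm H_mono H_sym vcg covers approx_rho delta_range [m m_eq] [s s_eq].
rewrite -s_eq => rho_lt; have rho_ge1 := approx_rho_ge1 n_gt0 approx_rho.
have s_gt1 : 1 < INR s by lra.
have [mss m_lt_n ln_s ln_m] := Rpower_exponent_facts n_gt0 delta_range s_gt1 s_eq m_eq.
have m_gt0 : (0 < m)%N by apply/ltP; apply: INR_lt; change (INR 0) with 0; nra.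
have [k [k_range k_le_2m s_lt_k k_min]] := exists_hard_prefix n_gt0 H_ge0 H_norm H_mono
  H_sym vcg covers approx_rho (m := m) ltac:(lia) mss rho_lt.
have [v_ge0 alg_eq pay soc] := hard_profile_spec n_gt0 H_ge0 H_norm H_mono H_sym vcg
  covers approx_rho k_range k_min.
have ln_s_le : ln (INR s) <= ln (INR k.+1) by apply: ln_le; rewrite ?S_INR; lra.
have ln_k_le : ln (INR k.+1) <= ln 2 + ln (INR m).
  rewrite -ln_mult; [|lra | exact: INR_gt0].
  by apply: ln_le; [exact: INR_gt0 | rewrite -INR_double; apply: le_INR; apply/leP].
have ln_n_le : ln (INR n) <= ln (INR n.+1).
  by apply: ln_le; rewrite ?S_INR; have := INR_gt0 n_gt0; lra.
exists (hard_profile H k); split=> //; split; first by rewrite alg_eq prefix_neq0 //; lia.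
split; first lra.
move=> OPT opt; apply: Rle_ge; apply: Rmult_le_of_unit.
- split; last exact: opt_social_cost_le1 n_gt0 opt.
  exact: Rle_trans (cost_ge0 OPT) (social_cost_ge_cost OPT v_ge0).
- by have := ln2_lt1; lra.
- exact: Rle_trans (cost_ge0 _) (social_cost_ge_cost _ v_ge0).
Qed.
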